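(* Let $Y$ be a finite-dimensional real Hilbert space, $J:Y\to\mathbb{R}$ a $C^1$ function with locally Lipschitzian derivative, and $\varphi:Y\to[0,+\infty[$ a $C^1$ convex function whose derivative is locally Lipschitzian at $0$, with $\varphi^{-1}(0)=\{0\}$. Then, for each $x_0\in Y$ for which $J'(x_0)\neq 0$, there exists $\delta>0$ such that, for each $r\in\,]0,\delta[$, the restriction of $J$ to $B(x_0,r)$ has a unique global minimum $u_r$, and it satisfies $$J(u_r)\leq J(x)-\varphi(x-u_r)$$ for all $x\in B(x_0,r)$, where $B(x_0,r)=\{x\in Y:\|x-x_0\|\leq r\}$. *)

From HB Require Import structures.
From mathcomp Require Import all_boot all_order all_algebra.
From mathcomp Require Import all_classical all_reals all_analysis.
Set Implicit Arguments. Unset Strict Implicit. Unset Printing Implicit Defensive.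
Import Order.TTheory GRing.Theory Num.Theory.
Import numFieldNormedType.Exports.
Local Open Scope ring_scope.
Local Open Scope classical_set_scope.

(* The finite-dimensional real Hilbert space Y is modelled as R^n = 'rV[R]_n
   with the Euclidean inner product <u,v> = \sum_i u_i v_i. *)

Definition enorm (R : realType) (n : nat) (v : 'rV[R]_n) : R :=
  Num.sqrt (\sum_(i < n) (v ord0 i) ^+ 2).

Definition eball (R : realType) (n : nat) (x0 : 'rV[R]_n) (r : R) : set 'rV[R]_n :=
  [set x | enorm (x - x0) <= r].

(* The derivative J'(x) identified (Riesz) with the gradient vector. *)
Definition grad (R : realType) (n : nat) (f : 'rV[R]_n -> R) (x : 'rV[R]_n)
  : 'rV[R]_n := \row_(i < n) ('d f x (delta_mx ord0 i)).

Definition lipschitz_near (R : realType) (n : nat) (g : 'rV[R]_n -> 'rV[R]_n)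
  (x : 'rV[R]_n) : Prop :=
  exists L : R, exists2 e : R, 0 < e &
    forall y z, enorm (y - x) <= e -> enorm (z - x) <= e ->
      enorm (g y - g z) <= L * enorm (y - z).

Definition locally_lipschitz (R : realType) (n : nat) (g : 'rV[R]_n -> 'rV[R]_n)
  : Prop := forall x, lipschitz_near g x.

Definition C1 (R : realType) (n : nat) (f : 'rV[R]_n -> R) : Prop :=
  (forall x, differentiable f x) /\ continuous (grad f).

Definition convex_fun (R : realType) (n : nat) (f : 'rV[R]_n -> R) : Prop :=
  forall x y (t : R), 0 <= t -> t <= 1 ->
    f (t *: x + (1 - t) *: y) <= t * f x + (1 - t) * f y.

From HB Require Import structures.
From mathcomp Require Import all_boot all_order all_algebra.
From mathcomp Require Import all_classical all_reals all_analysis.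
From mathcomp Require Import ring lra.
Import Order.TTheory GRing.Theory Num.Theory.
Import numFieldNormedType.Exports.
Local Open Scope ring_scope.
Local Open Scope classical_set_scope.
Set Implicit Arguments. Unset Strict Implicit. Unset Printing Implicit Defensive.

(* Let u minimise J on the closed ball B = B(x0, r) (compactness) and put
   g = J'(u).  The first-order condition <g, x - u> >= 0 on B says that u
   minimises the linear form <g, .> on B; since g != 0 (it stays close to
   J'(x0) for small r), this forces u = x0 - (r / |g|) g.  At that point of the sphere the
   ball is uniformly convex: |g| |x - u|^2 <= 2 r <g, x - u> for x in B.  The
   Lipschitz bounds give J x >= J u + <g, x - u> - L |x - u|^2 and, since phi is
   minimal at 0, phi h <= M |h|^2; as |g| / (2 r) -> +oo when r -> 0, the
   curvature term dominates (L + M) |x - u|^2. *)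

Section DirectionalDerivative.
Variables (R : realType) (V : normedModType R).

Lemma derive_ge0_right_min (f : V -> R) (u h : V) :
  derivable f u h -> (\forall t \near 0^'+, f u <= f (u + t *: h)) ->
  0 <= 'D_h f u.
Proof.
move=> df fmin; rewrite /derive cvg_at_rightE //; apply: limr_ge.
  rewrite -cvg_at_rightE //; apply: cvg_trans df; apply: cvg_app.
  by move=> A [e e0 Ae]; exists e => // t te t0; apply: Ae => //; exact/lt0r_neq0.
near=> t; apply: mulr_ge0.
  by rewrite invr_ge0 ltW //; near: t; exists 1.
rewrite subr_ge0 /= addrC; near: t; exact: fmin.
Unshelve. all: by end_near. Qed.

Lemma is_derive_line (f : V -> R) (u h : V) (t : R) :
  derivable f (u + t *: h) h ->
  is_derive t 1 (fun s => f (u + s *: h)) ('D_h f (u + t *: h)).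
Proof.
move=> df.
have quotientE : (fun s : R => s^-1 *: (((fun s => f (u + s *: h)) \o shift t) (s *: 1)
                       - f (u + t *: h))) =
         (fun s : R => s^-1 *: ((f \o shift (u + t *: h)) (s *: h) - f (u + t *: h))).
  apply/funext => s /=; congr (_ *: (f _ - _)).
  by rewrite [_ *: 1]mulr1 scalerDl addrCA addrA.
by apply: DeriveDef; rewrite /derivable /derive quotientE.
Qed.

End DirectionalDerivative.

Section Euclidean.
Variables (R : realType) (n : nat).
Implicit Types (u v w : 'rV[R]_n) (a : R).

Definition dot u v : R := \sum_(i < n) u ord0 i * v ord0 i.

Lemma dotC u v : dot u v = dot v u.
Proof. by apply: eq_bigr => i _; rewrite mulrC. Qed.

Lemma dotDr u v w : dot u (v + w) = dot u v + dot u w.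
Proof. by rewrite /dot -big_split; apply: eq_bigr => i _; rewrite mxE mulrDr. Qed.

Lemma dotZr u a v : dot u (a *: v) = a * dot u v.
Proof. by rewrite /dot mulr_sumr; apply: eq_bigr => i _; rewrite mxE mulrCA. Qed.

Lemma dotNr u v : dot u (- v) = - dot u v.
Proof. by rewrite -scaleN1r dotZr mulN1r. Qed.

Lemma dotBr u v w : dot u (v - w) = dot u v - dot u w.
Proof. by rewrite dotDr dotNr. Qed.

Lemma dotDl u v w : dot (v + w) u = dot v u + dot w u.
Proof. by rewrite dotC dotDr !(dotC u). Qed.

Lemma dotZl u a v : dot (a *: v) u = a * dot v u.
Proof. by rewrite dotC dotZr dotC. Qed.

Lemma dotNl u v : dot (- v) u = - dot v u.
Proof. by rewrite dotC dotNr dotC. Qed.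

Lemma dotBl u v w : dot (v - w) u = dot v u - dot w u.
Proof. by rewrite dotDl dotNl. Qed.

Lemma dot0r u : dot u 0 = 0.
Proof. by rewrite /dot big1 // => i _; rewrite mxE mulr0. Qed.

Lemma dot_ge0 v : 0 <= dot v v.
Proof. by apply: sumr_ge0 => i _; rewrite -expr2 sqr_ge0. Qed.

Lemma dot_eq0 v : (dot v v == 0) = (v == 0).
Proof.
apply/idP/eqP => [|->]; last by rewrite dot0r.
rewrite psumr_eq0 => [/allP v0|i _]; last by rewrite -expr2 sqr_ge0.
apply/rowP => i; have /implyP := v0 i (mem_index_enum i).
by rewrite -expr2 sqrf_eq0 mxE => /(_ isT)/eqP.
Qed.

Lemma enorm_sqr v : enorm v ^+ 2 = dot v v.
Proof.
rewrite sqr_sqrtr; last exact: dot_ge0.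
by apply: eq_bigr => i _; rewrite expr2.
Qed.

Lemma enorm_ge0 v : 0 <= enorm v.
Proof. exact: sqrtr_ge0. Qed.

Lemma enorm_eq0 v : (enorm v == 0) = (v == 0).
Proof. by rewrite -dot_eq0 -enorm_sqr sqrf_eq0. Qed.

Lemma enorm_gt0 v : (0 < enorm v) = (v != 0).
Proof. by rewrite lt0r enorm_eq0 enorm_ge0 andbT. Qed.

Lemma enorm0 : enorm (0 : 'rV[R]_n) = 0.
Proof. by apply/eqP; rewrite enorm_eq0. Qed.

Lemma enormZ a v : enorm (a *: v) = `|a| * enorm v.
Proof.
apply: (@pexpIrn _ 2) => //; rewrite ?nnegrE ?mulr_ge0 ?enorm_ge0 //.
by rewrite exprMn !enorm_sqr dotZl dotZr mulrA real_normK ?num_real.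
Qed.

Lemma enormN v : enorm (- v) = enorm v.
Proof. by rewrite -scaleN1r enormZ normrN normr1 mul1r. Qed.

Lemma enorm_distC u v : enorm (u - v) = enorm (v - u).
Proof. by rewrite -enormN opprB. Qed.

Lemma dot_le_enorm u v : dot u v <= enorm u * enorm v.
Proof.
have [->|a0] := eqVneq u 0; first by rewrite dotC dot0r enorm0 mul0r.
have [->|b0] := eqVneq v 0; first by rewrite dot0r enorm0 mulr0.
set a := enorm u; set b := enorm v.
have ab0 : 0 < a * b by rewrite mulr_gt0 ?enorm_gt0.
have := dot_ge0 (b *: u - a *: v).
rewrite !(dotBl, dotBr, dotZl, dotZr) -!enorm_sqr -/a -/b (dotC v u) => h.
have : 0 <= (a * b) * (2 * (a * b - dot u v)) by move: h; lra.
by rewrite pmulr_rge0 //; lra.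
Qed.

Lemma cauchy_schwarz u v : `|dot u v| <= enorm u * enorm v.
Proof.
rewrite ler_norml dot_le_enorm andbT.
by have := dot_le_enorm (- u) v; rewrite dotNl enormN; lra.
Qed.

Lemma enormD u v : enorm (u + v) <= enorm u + enorm v.
Proof.
rewrite -ler_sqr ?nnegrE ?addr_ge0 ?enorm_ge0 // enorm_sqr.
rewrite !(dotDl, dotDr) (dotC v u) sqrrD !enorm_sqr.
by have := dot_le_enorm u v; lra.
Qed.

Lemma enorm_coord v i : `|v ord0 i| <= enorm v.
Proof.
rewrite -ler_sqr ?nnegrE ?enorm_ge0 // real_normK ?num_real // /enorm.
rewrite sqr_sqrtr; last by apply: sumr_ge0 => j _; rewrite sqr_ge0.
by rewrite (bigD1 i) //= lerDl; apply: sumr_ge0 => j _; rewrite sqr_ge0.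
Qed.

End Euclidean.

Section Gradient.
Variables (R : realType) (n : nat).
Implicit Types (f : 'rV[R]_n -> R) (u v h : 'rV[R]_n).

Lemma diff_grad f u v : 'd f u v = dot (grad f u) v.
Proof.
rewrite {1}(row_sum_delta v) linear_sum /dot; apply: eq_bigr => i _.
by rewrite linearZ /= mxE mulrC.
Qed.

Lemma derive_grad f u v : differentiable f u -> 'D_v f u = dot (grad f u) v.
Proof. by move=> df; rewrite deriveE // diff_grad. Qed.

Lemma grad_dot_ge0_right_min f u h : differentiable f u ->
  (\forall t \near 0^'+, f u <= f (u + t *: h)) -> 0 <= dot (grad f u) h.
Proof.
move=> df fmin; rewrite -derive_grad //.
by apply: derive_ge0_right_min => //; exact: diff_derivable.
Qed.

Lemma grad_eq0_min f u : differentiable f u -> (forall x, f u <= f x) ->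
  grad f u = 0.
Proof.
move=> df fmin; apply/eqP; rewrite -dot_eq0 eq_le dot_ge0 andbT.
rewrite -oppr_ge0 -dotNr; apply: grad_dot_ge0_right_min => //.
exact: nearW.
Qed.

Lemma mvt_grad f u h : (forall x, differentiable f x) ->
  exists2 s : R, 0 <= s <= 1 & f (u + h) - f u = dot (grad f (u + s *: h)) h.
Proof.
move=> df.
have dline (t : R) : is_derive t 1 (fun s => f (u + s *: h)) (dot (grad f (u + t *: h)) h).
  by rewrite -derive_grad //; apply: is_derive_line; exact: diff_derivable.
have cline : {within `[0, 1], continuous (fun s => f (u + s *: h))}.
  apply: continuous_subspaceT => t; apply: differentiable_continuous.
  by apply/derivable1_diffP; have [] := dline t.
have [s s01] := MVT_segment ler01 (fun t _ => dline t) cline.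
rewrite scale1r scale0r addr0 subr0 mulr1 => ->.
by exists s; rewrite in_itv in s01.
Qed.

End Gradient.

Section Ball.
Variables (R : realType) (n : nat).
Implicit Types (f : 'rV[R]_n -> R) (c u x : 'rV[R]_n) (r : R).

Lemma eball_center c r : 0 <= r -> eball c r c.
Proof. by rewrite /eball /= subrr enorm0. Qed.

Lemma eball_convex c r u x s : eball c r u -> eball c r x -> 0 <= s <= 1 ->
  eball c r (u + s *: (x - u)).
Proof.
rewrite /eball /= => uB xB /andP[s0 s1].
have -> : u + s *: (x - u) - c = (1 - s) *: (u - c) + s *: (x - c).
  by apply/rowP => i; rewrite !mxE; ring.
apply: le_trans (enormD _ _) _; rewrite !enormZ ger0_norm ?subr_ge0 // ger0_norm //.
have : (1 - s) * enorm (u - c) <= (1 - s) * r by rewrite ler_wpM2l ?subr_ge0.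
have : s * enorm (x - c) <= s * r by rewrite ler_wpM2l.
lra.
Qed.

Lemma continuous_enorm_dist c : continuous (fun x => enorm (x - c)).
Proof.
move=> x; apply: (continuous_comp
  (f := fun x => \sum_(i < n) ((x - c) ord0 i) ^+ 2) (g := Num.sqrt)); last first.
  exact: sqrt_continuous.
apply: continuous_big => [|i _ y]; first exact: add_continuous.
apply: (continuous_comp (f := fun x => (x - c) ord0 i) (g := fun z => z ^+ 2)).
  apply: (continuous_comp (f := fun x => x - c) (g := fun M => M ord0 i)).
    by apply: continuousB; [exact: cvg_id | exact: cst_continuous].
  exact: coord_continuous.
exact: exprn_continuous.
Qed.

Lemma closed_eball c r : closed (eball c r).
Proof.
by have := proj1 (continuous_closedP _) (@continuous_enorm_dist c) _ (@closed_le R r).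
Qed.

Lemma compact_eball c r : compact (eball c r).
Proof.
have compact_box : compact
    [set v : 'rV[R]_n | forall i, `[c ord0 i - r, c ord0 i + r]%classic (v ord0 i)].
  apply: (@rV_compact _ _ (fun i => `[c ord0 i - r, c ord0 i + r]%classic)) => i.
  exact: segment_compact.
apply: subclosed_compact (@closed_eball c r) compact_box _ => x xB i /=.
rewrite in_itv /= -ler_distl; apply: le_trans xB.
by have := enorm_coord (x - c) i; rewrite !mxE.
Qed.

Lemma eball_argmin f c r : 0 <= r -> continuous f ->
  exists2 u, eball c r u & forall x, eball c r x -> f u <= f x.
Proof.
move=> r0 fc.
have [|u uB umin] := compact_EVT_min _ (@compact_eball c r) (continuous_subspaceT fc).
  by exists c; exact: eball_center.
by exists u; [rewrite inE in uB | move=> x xB; apply: umin; rewrite inE].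
Qed.

Lemma grad_dot_ge0_eball_min f c r u x : differentiable f u ->
  eball c r u -> (forall y, eball c r y -> f u <= f y) ->
  eball c r x -> 0 <= dot (grad f u) (x - u).
Proof.
move=> df uB umin xB; apply: grad_dot_ge0_right_min => //.
near=> t; apply/umin/eball_convex => //.
by apply/andP; split; near: t; [exact: nbhs_right_ge | exact: nbhs_right_le].
Unshelve. all: by end_near. Qed.

End Ball.

Section LipschitzGradient.
Variables (R : realType) (n : nat).
Implicit Types (f : 'rV[R]_n -> R) (g : 'rV[R]_n -> 'rV[R]_n) (c u x : 'rV[R]_n).

Definition elipschitz_on g (A : set 'rV[R]_n) (L : R) : Prop :=
  forall y z, A y -> A z -> enorm (g y - g z) <= L * enorm (y - z).

Lemma lipschitz_near_ge0 g x : lipschitz_near g x ->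
  exists L e, [/\ 0 <= L, 0 < e & elipschitz_on g (eball x e) L].
Proof.
move=> [L [e e0 gL]]; exists `|L|, e; split=> // y z yB zB.
by apply: le_trans (gL _ _ yB zB) _; rewrite ler_wpM2r ?enorm_ge0 ?ler_norm.
Qed.

Lemma elipschitz_enorm_ge g c e L u :
  elipschitz_on g (eball c e) L -> 0 <= e -> eball c e u ->
  enorm (g c) - L * enorm (u - c) <= enorm (g u).
Proof.
move=> gL e0 uB; have := enormD (g c - g u) (g u); rewrite subrK.
have := gL _ _ uB (eball_center c e0); rewrite enorm_distC; lra.
Qed.

Lemma lipschitz_grad_taylor f c e L u x : (forall y, differentiable f y) ->
  0 <= L -> elipschitz_on (grad f) (eball c e) L -> eball c e u -> eball c e x ->
  `|f x - f u - dot (grad f u) (x - u)| <= L * enorm (x - u) ^+ 2.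
Proof.
move=> df L0 fL uB xB.
have [s s01 mvt] := mvt_grad u (x - u) df.
rewrite subrKC in mvt; rewrite mvt -dotBl.
apply: le_trans (cauchy_schwarz _ _) _.
have uxB := eball_convex uB xB s01; move: s01 => /andP[s0 s1].
have seg_le : enorm (u + s *: (x - u) - u) <= enorm (x - u).
  rewrite [u + _ - u]addrAC subrr add0r enormZ ger0_norm //.
  by rewrite ler_piMl ?enorm_ge0.
rewrite expr2 mulrA ler_wpM2r ?enorm_ge0 //.
by apply: le_trans (fL _ _ uxB uB) _; rewrite ler_wpM2l.
Qed.

Lemma le_min_quadratic f u e L x : (forall y, differentiable f y) ->
  (forall y, f u <= f y) -> 0 <= e -> 0 <= L ->
  elipschitz_on (grad f) (eball u e) L -> eball u e x ->
  f x <= f u + L * enorm (x - u) ^+ 2.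
Proof.
move=> df umin e0 L0 fL xB.
have := lipschitz_grad_taylor df L0 fL (eball_center u e0) xB.
by rewrite grad_eq0_min // dotC dot0r subr0 ler_norml lerBlDl => /andP[_].
Qed.

End LipschitzGradient.

Section Antipode.
Variables (R : realType) (n : nat).
Implicit Types (c g u x : 'rV[R]_n) (r : R).

Lemma enorm_sqrDZ x a g :
  enorm (x + a *: g) ^+ 2 = enorm x ^+ 2 + 2 * a * dot g x + a ^+ 2 * enorm g ^+ 2.
Proof. by rewrite !enorm_sqr dotDl !dotDr !dotZl !dotZr (dotC x g); ring. Qed.

Lemma eball_antipode c g r : 0 <= r -> g != 0 ->
  eball c r (c - (r / enorm g) *: g).
Proof.
move=> r0 g0; rewrite /eball /= addrAC subrr add0r enormN enormZ.
by rewrite ger0_norm ?divr_ge0 ?enorm_ge0 // divfK // enorm_eq0.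
Qed.

Lemma eball_dot_argmin c g u r : 0 <= r -> g != 0 -> eball c r u ->
  (forall x, eball c r x -> 0 <= dot g (x - u)) ->
  u = c - (r / enorm g) *: g.
Proof.
move=> r0 g0 uB normal; set q := r / enorm g.
have qg : q * enorm g = r by rewrite divfK // enorm_eq0.
(* At the antipode the normal condition gives <g, u - c> <= - r |g|, which
   together with |u - c| <= r forces |u - c + q g| = 0. *)
have := normal _ (eball_antipode c r0 g0); rewrite -/q.
have -> : c - q *: g - u = - ((u - c) + q *: g).
  by apply/rowP => i; rewrite !mxE; ring.
rewrite dotNr oppr_ge0 dotDr dotZr -enorm_sqr => normal_at_antipode.
have : enorm (u - c) ^+ 2 <= r ^+ 2 by rewrite ler_sqr ?nnegrE ?enorm_ge0.
have : 0 <= q by rewrite divr_ge0 ?enorm_ge0.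
move: (enorm_sqrDZ (u - c) q g); rewrite -qg => expand q0 ur.
apply/eqP; rewrite -subr_eq0 -enorm_eq0 -sqrf_eq0.
have -> : u - (c - q *: g) = u - c + q *: g by rewrite opprD opprK addrA.
rewrite eq_le sqr_ge0 andbT expand; nra.
Qed.

Lemma sqr_enorm_le_dot_antipode c g r x : g != 0 -> eball c r x ->
  enorm g * enorm (x - (c - (r / enorm g) *: g)) ^+ 2 <=
  2 * r * dot g (x - (c - (r / enorm g) *: g)).
Proof.
move=> g0 xB; set q := r / enorm g.
have qg : q * enorm g = r by rewrite divfK // enorm_eq0.
have -> : x - (c - q *: g) = x - c + q *: g by rewrite opprD opprK addrA.
rewrite enorm_sqrDZ [dot g (x - c + _)]dotDr dotZr -enorm_sqr.
have : enorm (x - c) ^+ 2 <= r ^+ 2.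
  by rewrite ler_sqr ?nnegrE ?enorm_ge0 //; apply: le_trans (enorm_ge0 _) xB.
have := enorm_ge0 g; rewrite -qg; nra.
Qed.

End Antipode.

Section SharpBallMinimum.
Variables (R : realType) (n : nat) (J phi : 'rV[R]_n -> R) (x0 : 'rV[R]_n).
Variables (L M e r : R).
Hypotheses (dJ : forall x, differentiable J x) (L0 : 0 <= L) (M0 : 0 <= M).
Hypothesis JL : elipschitz_on (grad J) (eball x0 e) L.
Hypothesis phi_le_sqr : forall h, enorm h <= 2 * r -> phi h <= M * enorm h ^+ 2.
Hypotheses (r0 : 0 < r) (re : r <= e).

Lemma eball_le_radius y : eball x0 r y -> eball x0 e y.
Proof. by move=> yB; apply: le_trans re. Qed.

Lemma grad_gt_eball u : (3 * L + 2 * M) * r < enorm (grad J x0) ->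
  eball x0 r u -> 2 * (L + M) * r < enorm (grad J u).
Proof.
move=> grad_x0 uB; have e0 : 0 <= e by apply: le_trans re; exact: ltW.
apply: lt_le_trans (elipschitz_enorm_ge JL e0 (eball_le_radius uB)).
rewrite ltrBrDl; apply: le_lt_trans grad_x0.
have : L * enorm (u - x0) <= L * r by rewrite ler_wpM2l.
lra.
Qed.

Lemma sharp_eball_min : (3 * L + 2 * M) * r < enorm (grad J x0) ->
  exists2 u, eball x0 r u & forall x, eball x0 r x -> J u <= J x - phi (x - u).
Proof.
move=> grad_x0.
have [u uB umin] := eball_argmin x0 (ltW r0) (fun x => differentiable_continuous (dJ x)).
have {grad_x0} g_gt := grad_gt_eball grad_x0 uB.
exists u => // x xB; set g := grad J u in g_gt *.
have g0 : g != 0.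
  by rewrite -enorm_gt0; apply: le_lt_trans g_gt; rewrite !mulr_ge0 ?addr_ge0 // ltW.
have u_antipode : u = x0 - (r / enorm g) *: g.
  apply: (eball_dot_argmin (ltW r0) g0 uB) => y yB.
  exact: grad_dot_ge0_eball_min (dJ u) uB umin yB.
have curv := sqr_enorm_le_dot_antipode g0 xB; rewrite -u_antipode in curv.
have dot_ge_sqr : (L + M) * enorm (x - u) ^+ 2 <= dot g (x - u).
  have r2 : 0 < 2 * r by rewrite mulr_gt0.
  rewrite -(ler_pM2l r2); apply: (le_trans _ curv).
  rewrite mulrA; apply: ler_wpM2r; first exact: sqr_ge0.
  by rewrite mulrAC; apply: ltW.
have := lipschitz_grad_taylor dJ L0 JL (eball_le_radius uB) (eball_le_radius xB).
rewrite ler_norml => /andP[taylor _].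
have phi_le : phi (x - u) <= M * enorm (x - u) ^+ 2.
  apply: phi_le_sqr; rewrite -(subrKA x0) mulrDl mul1r.
  by apply: le_trans (enormD _ _) _; rewrite (enorm_distC x0); apply: lerD.
lra.
Qed.

End SharpBallMinimum.

Theorem theorem1p3 (R : realType) (n : nat)
  (J : 'rV[R]_n -> R) (phi : 'rV[R]_n -> R)
  (HJ : C1 J) (HJlip : locally_lipschitz (grad J))
  (Hphi : C1 phi) (Hphilip : lipschitz_near (grad phi) 0)
  (Hphiconv : convex_fun phi)
  (Hphi0 : forall x, 0 <= phi x)
  (Hphizero : forall x, phi x = 0 <-> x = 0)
  (x0 : 'rV[R]_n) (Hx0 : grad J x0 != 0) :
  exists2 delta : R, 0 < delta &
    forall r : R, 0 < r -> r < delta ->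
      exists u : 'rV[R]_n,
        [/\ eball x0 r u,
            (forall x, eball x0 r x -> J u <= J x),
            (forall v, eball x0 r v -> (forall x, eball x0 r x -> J v <= J x) -> v = u)
          & (forall x, eball x0 r x -> J u <= J x - phi (x - u))].
Proof.
have [[dJ _] [dphi _]] := (HJ, Hphi).
have [LJ [eJ [LJ0 eJ0 JL]]] := lipschitz_near_ge0 (HJlip x0).
have [Lp [ep [Lp0 ep0 phiL]]] := lipschitz_near_ge0 Hphilip.
have phi0 : phi 0 = 0 by apply/Hphizero.
have phi_sqr h : enorm h <= ep -> phi h <= Lp * enorm h ^+ 2.
  move=> h_ep; have := le_min_quadratic (u := 0) (x := h) dphi _ (ltW ep0) Lp0 phiL.
  by rewrite phi0 add0r subr0; apply=> //; rewrite /eball /= subr0.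
have K0 : 0 < 3 * LJ + 2 * Lp + 1 by lra.
have gx0 : 0 < enorm (grad J x0) by rewrite enorm_gt0.
exists (Num.min eJ (Num.min (ep / 2) (enorm (grad J x0) / (3 * LJ + 2 * Lp + 1)))).
  by rewrite !lt_min eJ0 !divr_gt0.
move=> r r0; rewrite !lt_min => /andP[reJ /andP[rep rK]].
have phi_sqr_2r h : enorm h <= 2 * r -> phi h <= Lp * enorm h ^+ 2.
  move=> h2r; apply: phi_sqr; apply: le_trans h2r _.
  by move: rep; rewrite ltr_pdivlMr //; lra.
have grad_x0 : (3 * LJ + 2 * Lp) * r < enorm (grad J x0).
  by move: rK; rewrite ltr_pdivlMr //; lra.
have [u uB sharp] := sharp_eball_min dJ LJ0 Lp0 JL phi_sqr_2r r0 (ltW reJ) grad_x0.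
have Ju_min x : eball x0 r x -> J u <= J x.
  by move=> xB; have := sharp x xB; have := Hphi0 (x - u); lra.
exists u; split => // v vB vmin; apply/eqP; rewrite -subr_eq0; apply/eqP/Hphizero.
by have := sharp v vB; have := vmin u uB; have := Hphi0 (v - u); lra.
Qed.
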